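(* The function $t\mapsto \frac1t-M(t)$ is positive and decreasing on $(0,\infty)$.
   Context: For $t>0$, $M(t)=\int_0^\infty \frac{e^{-tu}}{\sqrt{u^2+1}}\,du$. *)

From Stdlib Require Import Reals.
From Coquelicot Require Import Coquelicot.
Open Scope R_scope.

Definition M (t : R) : R :=
  RInt_gen (fun u => exp (- t * u) / sqrt (u ^ 2 + 1))
           (at_point 0) (Rbar_locally p_infty).

From Stdlib Require Import Reals Lra Classical.
From Coquelicot Require Import Coquelicot.
Open Scope R_scope.

(* Since the integral of e^{-tu} over [0, oo) is 1/t, the difference 1/t - M(t) is the
   integral of gap t u = e^{-tu} (1 - 1/sqrt(u^2+1)), whose partial integrals increase and
   stay below 1/t, so it converges.  For u > 0 the integrand gap t u is positive and
   strictly decreasing in t, which gives both positivity and monotonicity. *)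

Lemma is_lim_incr_bounded (f : R -> R) (a B : R) :
  (forall x y, a <= x -> x <= y -> f x <= f y) ->
  (forall x, a <= x -> f x <= B) ->
  exists l : R, is_lim f p_infty l.
Proof.
  intros f_incr f_le_B.
  set (E := fun z => exists x, a <= x /\ z = f x).
  assert (E_bound : bound E) by (exists B; intros z [x [Hx ->]]; auto).
  assert (E_inhabited : exists z, E z) by (exists (f a); exists a; split; [lra | auto]).
  destruct (completeness E E_bound E_inhabited) as [L [L_ub L_least]].
  exists L; intros P [eps HP].
  assert (not_ub : ~ is_upper_bound E (L - eps)).
  { intro H; specialize (L_least _ H); destruct eps; simpl in *; lra. }
  apply not_all_ex_not in not_ub as [z Hz].
  apply imply_to_and in Hz as [[x0 [Hx0 ->]] Hx0_gt].
  exists (Rmax x0 a); intros y Hy; apply HP.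
  assert (Hx0y : x0 <= y) by (generalize (Rmax_l x0 a); lra).
  assert (f x0 <= f y) by (apply f_incr; lra).
  assert (f y <= L) by (apply L_ub; exists y; split; [generalize (Rmax_r x0 a) |]; auto; lra).
  change (Rabs (f y - L) < eps); apply Rabs_def1; destruct eps; simpl in *; lra.
Qed.

Lemma is_RInt_gen_of_is_lim (f : R -> R) (a l : R) :
  (forall b, ex_RInt f a b) ->
  is_lim (fun b => RInt f a b) p_infty l ->
  is_RInt_gen f (at_point a) (Rbar_locally p_infty) l.
Proof.
  intros f_int f_lim P HP.
  destruct (f_lim P HP) as [N HN].
  exists (fun x => x = a) (fun b => N < b).
  - reflexivity.
  - exists N; auto.
  - intros x b -> Hb; simpl.
    exists (RInt f a b); split; [exact (RInt_correct f a b (f_int b)) | exact (HN b Hb)].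
Qed.

Lemma ex_RInt_continuous_R (f : R -> R) (a b : R) :
  (forall u, continuous f u) -> ex_RInt f a b.
Proof. intros f_cont; apply (@ex_RInt_continuous R_CompleteNormedModule); auto. Qed.

Lemma ex_derive_continuous_R (f : R -> R) (u : R) : ex_derive f u -> continuous f u.
Proof. apply (@ex_derive_continuous R_AbsRing R_NormedModule). Qed.

Lemma RInt_minus_R (f g : R -> R) (a b : R) :
  ex_RInt f a b -> ex_RInt g a b ->
  RInt (fun u => f u - g u) a b = RInt f a b - RInt g a b.
Proof. exact (@RInt_minus R_CompleteNormedModule f g a b). Qed.

Section PositiveIntegrand.

Variables (f : R -> R) (a : R).
Hypothesis f_cont : forall u, continuous f u.
Hypothesis f_pos : forall u, a < u -> 0 < f u.

Lemma RInt_incr (x y : R) : a <= x -> x <= y -> RInt f a x <= RInt f a y.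
Proof.
  intros Hax Hxy.
  rewrite <- (RInt_Chasles f a x y) by apply ex_RInt_continuous_R, f_cont.
  assert (0 <= RInt f x y); [| change (plus ?u ?v) with (u + v); lra].
  apply RInt_ge_0; [lra | apply ex_RInt_continuous_R, f_cont |].
  intros u Hu; left; apply f_pos; lra.
Qed.

Lemma is_lim_RInt_gt_0 (l : R) : is_lim (fun b => RInt f a b) p_infty l -> 0 < l.
Proof.
  intros f_lim.
  assert (Rbar_le (RInt f a (a + 1)) l).
  { apply (is_lim_le_loc (fun _ => RInt f a (a + 1)) (fun b => RInt f a b) p_infty);
      [| apply is_lim_const | exact f_lim].
    exists (a + 1); intros y Hy; apply RInt_incr; lra. }
  simpl in *.
  assert (0 < RInt f a (a + 1)); [| lra].
  apply RInt_gt_0; [lra | | auto].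
  intros u Hu; apply f_pos; lra.
Qed.

End PositiveIntegrand.

Lemma continuous_exp_decay (t u : R) : continuous (fun u => exp (- t * u)) u.
Proof. apply ex_derive_continuous_R; auto_derive; auto. Qed.

Lemma RInt_exp_decay (t b : R) :
  t <> 0 -> RInt (fun u => exp (- t * u)) 0 b = (1 - exp (- t * b)) / t.
Proof.
  intros Ht.
  apply is_RInt_unique.
  replace ((1 - exp (- t * b)) / t)
    with (minus (- exp (- t * b) / t) (- exp (- t * 0) / t))
    by (unfold minus, plus, opp; simpl; rewrite Rmult_0_r, exp_0; field; auto).
  apply (is_RInt_derive (fun u => - exp (- t * u) / t)).
  - intros x _; auto_derive; [auto | field; auto].
  - intros x _; apply continuous_exp_decay.
Qed.

Lemma is_lim_RInt_exp_decay (t : R) :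
  0 < t -> is_lim (fun b => RInt (fun u => exp (- t * u)) 0 b) p_infty (1 / t).
Proof.
  intros Ht.
  assert (lin_lim : is_lim (fun b => - t * b) p_infty m_infty).
  { replace m_infty with (Rbar_mult (- t) p_infty).
    - apply is_lim_scal_l, is_lim_id.
    - simpl; destruct Rle_dec; [exfalso; lra | reflexivity]. }
  assert (exp_lim : is_lim (fun b => exp (- t * b)) p_infty 0).
  { apply (is_lim_comp exp (fun b => - t * b) p_infty 0 m_infty);
      [apply is_lim_exp_m | exact lin_lim | exists 0; discriminate]. }
  apply (is_lim_ext (fun b => (1 - exp (- t * b)) * / t)).
  { intros b; rewrite RInt_exp_decay by lra; reflexivity. }
  replace (1 / t) with ((1 - 0) * / t) by (field; lra).
  apply (is_lim_scal_r (fun b => 1 - exp (- t * b)) (/ t) p_infty (1 - 0)).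
  apply is_lim_minus'; [apply is_lim_const | exact exp_lim].
Qed.

Definition gap (t u : R) : R := exp (- t * u) * (1 - / sqrt (u ^ 2 + 1)).

Lemma inv_sqrt_sqr_add1_lt_1 (u : R) : 0 < u -> / sqrt (u ^ 2 + 1) < 1.
Proof.
  intros Hu.
  assert (sqrt_gt_1 : 1 < sqrt (u ^ 2 + 1)) by (rewrite <- sqrt_1 at 1; apply sqrt_lt_1_alt; nra).
  rewrite <- Rinv_1 at 2; apply Rinv_lt_contravar; [lra | exact sqrt_gt_1].
Qed.

Lemma continuous_gap (t u : R) : continuous (gap t) u.
Proof.
  apply ex_derive_continuous_R; unfold gap; auto_derive.
  repeat split; try nra; apply Rgt_not_eq, sqrt_lt_R0; nra.
Qed.

Lemma gap_pos (t u : R) : 0 < u -> 0 < gap t u.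
Proof. intros Hu; apply Rmult_lt_0_compat; [apply exp_pos | generalize (inv_sqrt_sqr_add1_lt_1 u Hu); lra]. Qed.

Lemma gap_le_exp (t u : R) : gap t u <= exp (- t * u).
Proof.
  unfold gap.
  assert (0 < / sqrt (u ^ 2 + 1)) by (apply Rinv_0_lt_compat, sqrt_lt_R0; nra).
  generalize (exp_pos (- t * u)); nra.
Qed.

Lemma gap_decreasing (s t u : R) : 0 < u -> s < t -> gap t u < gap s u.
Proof.
  intros Hu Hst; unfold gap.
  assert (exp (- t * u) < exp (- s * u)) by (apply exp_increasing; nra).
  generalize (inv_sqrt_sqr_add1_lt_1 u Hu); nra.
Qed.

Lemma RInt_gap_le_inv (t x : R) : 0 < t -> 0 <= x -> RInt (gap t) 0 x <= 1 / t.
Proof.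
  intros Ht Hx.
  apply Rle_trans with (RInt (fun u => exp (- t * u)) 0 x).
  - apply RInt_le; [lra | | | intros; apply gap_le_exp];
      apply ex_RInt_continuous_R; [apply continuous_gap | apply continuous_exp_decay].
  - rewrite RInt_exp_decay by lra.
    assert (0 < / t) by (apply Rinv_0_lt_compat, Ht).
    generalize (exp_pos (- t * x)); unfold Rdiv; nra.
Qed.

Lemma RInt_M_integrand (t b : R) :
  RInt (fun u => exp (- t * u) / sqrt (u ^ 2 + 1)) 0 b
  = RInt (fun u => exp (- t * u)) 0 b - RInt (gap t) 0 b.
Proof.
  rewrite <- RInt_minus_R by (apply ex_RInt_continuous_R;
    first [apply continuous_gap | apply continuous_exp_decay]).
  apply RInt_ext; intros u _.
  change (exp (- t * u) / sqrt (u ^ 2 + 1) = exp (- t * u) - gap t u).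
  unfold gap, Rdiv; ring.
Qed.

Lemma is_lim_RInt_gap (t : R) :
  0 < t -> is_lim (fun b => RInt (gap t) 0 b) p_infty (1 / t - M t).
Proof.
  intros Ht.
  destruct (is_lim_incr_bounded (fun b => RInt (gap t) 0 b) 0 (1 / t)) as [N HN].
  - apply RInt_incr; [apply continuous_gap | apply gap_pos].
  - intros x Hx; apply RInt_gap_le_inv; assumption.
  - replace (1 / t - M t) with N; [exact HN |].
    unfold M; rewrite (is_RInt_gen_unique _ (1 / t - N)); [ring |].
    apply is_RInt_gen_of_is_lim.
    + intros b; apply ex_RInt_continuous_R; intros u.
      apply ex_derive_continuous_R; auto_derive.
      repeat split; try nra; apply Rgt_not_eq, sqrt_lt_R0; nra.
    + apply (is_lim_ext (fun b => RInt (fun u => exp (- t * u)) 0 b - RInt (gap t) 0 b)).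
      * intros b; symmetry; apply RInt_M_integrand.
      * apply is_lim_minus'; [apply is_lim_RInt_exp_decay, Ht | exact HN].
Qed.

Theorem proposition2 :
  (forall t : R, 0 < t -> 0 < 1 / t - M t) /\
  (forall s t : R, 0 < s -> s < t -> 1 / t - M t < 1 / s - M s).
Proof.
  split.
  - intros t Ht.
    apply (is_lim_RInt_gt_0 (gap t) 0); [apply continuous_gap | apply gap_pos |].
    apply is_lim_RInt_gap, Ht.
  - intros s t Hs Hst.
    assert (0 < (1 / s - M s) - (1 / t - M t)); [| lra].
    apply (is_lim_RInt_gt_0 (fun u => gap s u - gap t u) 0).
    + intros u; apply (@continuous_minus _ _ R_NormedModule (gap s) (gap t)); apply continuous_gap.
    + intros u Hu; generalize (gap_decreasing s t u Hu Hst); lra.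
    + apply is_lim_ext with (fun b => RInt (gap s) 0 b - RInt (gap t) 0 b).
      * intros b; rewrite RInt_minus_R; auto; apply ex_RInt_continuous_R, continuous_gap.
      * apply is_lim_minus'; apply is_lim_RInt_gap; lra.
Qed.
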